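(* Let $n>1$ and $1\le k\le n$ be integers. Let $\boldsymbol S$ be the $(2n-1)\times n$ matrix such that for every $\boldsymbol b=(b_1,\dots,b_n)'\in\mathbb R^n$, writing $a_i=\sum_{j=1}^i b_j$, $$\boldsymbol S\boldsymbol b=(a_n,a_{n-1},\dots,a_2,b_1,b_2,\dots,b_n)'.$$ Let $\boldsymbol S_{[k]}$ be the $(2n-1)\times n$ matrix such that for every $\boldsymbol c=(c_1,\dots,c_n)'\in\mathbb R^n$, $$\boldsymbol S_{[k]}\boldsymbol c=(\alpha_n,\alpha_{n-1},\dots,\alpha_{k+1},\alpha_{k-1},\dots,\alpha_1,c_1,\dots,c_n)',\qquad \alpha_i=\begin{cases}\sum_{j=k}^{i}c_j,& i>k,\\ \sum_{j=i}^{k}c_j,& i\le k.\end{cases}$$ Let $\boldsymbol B_{[k]}$ be the $(2n-1)\times(2n-1)$ signed permutation matrix defined as follows: if $k=1$, $\boldsymbol B_{[1]}=\boldsymbol I_{2n-1}$; if $k\ge 2$, then for every $\boldsymbol z=(u_n,\dots,u_{k+1},u_{k-1},\dots,u_1,v_1,\dots,v_n)'\in\mathbb R^{2n-1}$, $$\boldsymbol B_{[k]}\boldsymbol z=(u_n,\dots,u_{k+1},\,v_k,\,u_{k-1},\dots,u_2,\,u_1,\,-v_1,\dots,-v_{k-1},\,v_{k+1},\dots,v_n)'.$$ Let $\boldsymbol W$ be an invertible $(2n-1)\times(2n-1)$ matrix such that $\boldsymbol S'\boldsymbol W^{-1}\boldsymbol S$ is invertible, and let $\boldsymbol W_{[k]}$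 be an invertible $(2n-1)\times(2n-1)$ matrix. Let $\widehat{\boldsymbol y},\widehat{\boldsymbol y}_{[k]}\in\mathbb R^{2n-1}$ and define $$\widetilde{\boldsymbol y}=\boldsymbol S(\boldsymbol S'\boldsymbol W^{-1}\boldsymbol S)^{-1}\boldsymbol S'\boldsymbol W^{-1}\widehat{\boldsymbol y},\qquad \widetilde{\boldsymbol y}_{[k]}=\boldsymbol S_{[k]}(\boldsymbol S_{[k]}'\boldsymbol W_{[k]}^{-1}\boldsymbol S_{[k]})^{-1}\boldsymbol S_{[k]}'\boldsymbol W_{[k]}^{-1}\widehat{\boldsymbol y}_{[k]}.$$ If $\widehat{\boldsymbol y}=\boldsymbol B_{[k]}\widehat{\boldsymbol y}_{[k]}$ and $\boldsymbol W_{[k]}^{-1}=\boldsymbol B_{[k]}'\boldsymbol W^{-1}\boldsymbol B_{[k]}$, then $\boldsymbol S_{[k]}'\boldsymbol W_{[k]}^{-1}\boldsymbol S_{[k]}$ is invertible (so $\widetilde{\boldsymbol y}_{[k]}$ is well defined) and $$\widetilde{\boldsymbol y}=\boldsymbol B_{[k]}\widetilde{\boldsymbol y}_{[k]}.$$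
   Context: This concerns hierarchical (minimum-trace/GLS) forecast reconciliation of an aggregated curve given by cumulative values $\boldsymbol a=(a_1,\dots,a_n)'$. The canonical representation uses bottom values $b_1=a_1$, $b_i=a_i-a_{i-1}$ ($i>1$) and the stacked vector $\boldsymbol y=(a_n,\dots,a_2,b_1,\dots,b_n)'=\boldsymbol S\boldsymbol b$. An alternative representation disaggregates starting from position $k$: $b_{[k],i}=a_i-a_{i-1}$ for $i>k$, $b_{[k],i}=a_i-a_{i+1}$ for $i<k$, $b_{[k],k}=a_k$, with stacked vector $\boldsymbol y_{[k]}=(a_n,\dots,a_{k+1},a_{k-1},\dots,a_1,\boldsymbol b_{[k]}')'=\boldsymbol S_{[k]}\boldsymbol b_{[k]}$; the matrix $\boldsymbol B_{[k]}$ (orthogonal) satisfies $\boldsymbol y=\boldsymbol B_{[k]}\boldsymbol y_{[k]}$ for such coherent vectors. $\widehat{\boldsymbol y}$, $\widehat{\boldsymbol y}_{[k]}$ are (possibly incoherent) base forecasts and $\widetilde{\boldsymbol y}$, $\widetilde{\boldsymbol y}_{[k]}$ the optimally reconciled forecasts with weight matrices $\boldsymbol W$, $\boldsymbol W_{[k]}$ (in the paper, $\boldsymbol W$ is the covariance matrix of base forecast errors). *)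

(* Indices are 0-based naturals below; the paper's are 1-based. *)
From mathcomp Require Import all_boot all_order all_algebra.
Set Implicit Arguments. Unset Strict Implicit. Unset Printing Implicit Defensive.
Import GRing.Theory Num.Theory.
Local Open Scope ring_scope.

(* Canonical summing matrix S : (2n-1) x n.
   Row r < n-1 is a_(n-r) = b_1 + ... + b_(n-r): column c (b_(c+1)) has 1 iff c < n - r.
   Row r >= n-1 is b_(r-n+2): column c has 1 iff c = r - (n-1). *)
Definition Smx (R : pzRingType) (n : nat) : 'M[R]_(2 * n - 1, n) :=
  \matrix_(r < 2 * n - 1, c < n)
    (if (r < n - 1)%N then (c < n - r)%N%:R else (c == r - (n - 1) :> nat)%N%:R).

(* S_[k] (k is 1-based, 1 <= k <= n).
   Row r < n-k is alpha_i with i = n - r > k : sum_{j=k}^{i} c_j,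
     i.e. column c (c_(c+1)) has 1 iff k <= c+1 <= i.
   Row n-k <= r < n-1 is alpha_i with i = n - r - 1 < k : sum_{j=i}^{k} c_j,
     i.e. column c has 1 iff i <= c+1 <= k.
   Row r >= n-1 is c_(r-n+2). *)
Definition Skmx (R : pzRingType) (n k : nat) : 'M[R]_(2 * n - 1, n) :=
  \matrix_(r < 2 * n - 1, c < n)
    (if (r < n - k)%N then ((k <= c.+1) && (c.+1 <= n - r))%N%:R
     else if (r < n - 1)%N then ((n - r - 1 <= c.+1) && (c.+1 <= k))%N%:R
     else (c == r - (n - 1) :> nat)%N%:R).

(* Signed permutation B_[k]: (B z)_p = sgn p * z_(src p) (0-based positions).
   Input layout z = (u_n..u_{k+1}, u_{k-1}..u_1, v_1..v_n):
     u_i (i>k) at n-i, u_i (i<k) at n-1-i, v_j at n-2+j.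
   Output layout (u_n..u_{k+1}, v_k, u_{k-1}..u_2, u_1, -v_1..-v_{k-1}, v_{k+1}..v_n). *)
Definition Bsrc (n k p : nat) : nat :=
  (if p < n - k then p
  else if p == n - k then (n - 2 + k)%N
  else if (p < n - 1)%N then p.-1
  else if p == (n - 1)%N then (n - 2)%N
  else if (p <= n + k - 2)%N then p.-1
  else p)%N.

Definition Bsgn (R : pzRingType) (n k p : nat) : R :=
  if ((n <= p) && (p <= n + k - 2))%N then -1 else 1.

Definition Bkmx (R : pzRingType) (n k : nat) : 'M[R]_(2 * n - 1) :=
  if k == 1%N then 1%:M
  else \matrix_(p < 2 * n - 1, q < 2 * n - 1)
         (if q == Bsrc n k p :> nat then Bsgn R n k p else 0).

Definition recon (R : fieldType) (m p : nat) (S : 'M[R]_(m, p)) (W : 'M[R]_m)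
  (y : 'cV[R]_m) : 'cV[R]_m :=
  S *m invmx (S^T *m invmx W *m S) *m S^T *m invmx W *m y.

From mathcomp Require Import all_boot all_order all_algebra zify ring.
Set Implicit Arguments. Unset Strict Implicit. Unset Printing Implicit Defensive.
Import GRing.Theory Num.Theory.
Local Open Scope ring_scope.

(* Both representations describe the same coherent subspace: [B_[k] S_[k] = S T]
   where the invertible matrix [T] expresses the canonical bottom values [b] in
   terms of the bottom values [c] of the [k]-representation ([b = T c]).  GLS
   reconciliation depends on [S] only through its column space, so it is
   unchanged by [S |-> S T]; and transporting the weights by [B] makes it
   equivariant under [B], whether or not [B] is invertible. *)

Lemma invmxM (R : comUnitRingType) p (A B : 'M[R]_p) :
  A \in unitmx -> B \in unitmx -> invmx (A *m B) = invmx B *m invmx A.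
Proof.
move=> uA uB; have uAB : A *m B \in unitmx by rewrite unitmx_mul uA uB.
rewrite -[RHS]mul1mx -(mulVmx uAB) -!mulmxA.
by rewrite [B *m _]mulmxA (mulmxV uB) mul1mx (mulmxV uA) mulmx1.
Qed.

Lemma quad_mulmx (R : comPzSemiRingType) m p q
    (S : 'M[R]_(m, p)) (T : 'M[R]_(p, q)) (V : 'M[R]_m) :
  (S *m T)^T *m V *m (S *m T) = T^T *m (S^T *m V *m S) *m T.
Proof. by rewrite trmx_mul !mulmxA. Qed.

Section Reconciliation.
Variables (R : fieldType) (m p : nat).
Implicit Types (S : 'M[R]_(m, p)) (W : 'M[R]_m) (y : 'cV[R]_m).

Lemma mulmx_recon (B W Wk : 'M[R]_m) :
  invmx Wk = B^T *m invmx W *m B -> forall S y,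
  B *m recon S Wk y = recon (B *m S) W (B *m y).
Proof. by move=> hWk S y; rewrite /recon hWk quad_mulmx trmx_mul !mulmxA. Qed.

Lemma recon_mulmxr W S (T : 'M[R]_p) y :
  S^T *m invmx W *m S \in unitmx -> T \in unitmx ->
  recon (S *m T) W y = recon S W y.
Proof.
move=> uM uT; have uTt : T^T \in unitmx by rewrite unitmx_tr.
rewrite /recon quad_mulmx invmxM ?unitmx_mul ?uTt // invmxM // trmx_mul.
by rewrite !mulmxA (mulmxK uT) (mulmxKV uTt).
Qed.

End Reconciliation.

Lemma sum_mul_indicator_ord (R : pzSemiRingType) n (j0 : 'I_n) (F : 'I_n -> R) m b :
  \sum_(j < n) F j * ((j == m :> nat) && b)%:R
  = if (m < n)%N && b then F (insubd j0 m) else 0.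
Proof.
case: b; last by rewrite andbF big1 // => j _; rewrite andbF mulr0.
rewrite andbT; case: ltnP => hm.
  rewrite (bigD1 (insubd j0 m)) //= val_insubd hm eqxx mulr1 big1 ?addr0 //.
  move=> j hj; case: eqP => e; rewrite ?mulr0 //.
  by case/eqP: hj; apply: val_inj; rewrite /= val_insubd hm.
rewrite big1 // => j _; case: eqP => e; rewrite ?mulr0 //.
by move: (ltn_ord j); rewrite e ltnNge hm.
Qed.

Ltac free_of_if t := lazymatch t with context [if _ then _ else _] => fail | _ => idtac end.

Ltac case_nat_tests := repeat match goal with
 | |- context [(?a <= ?b)%N] => free_of_if a; free_of_if b; case: (leqP a b) => ?; try (exfalso; lia)
 | |- context [(?a == ?b)] => free_of_if a; free_of_if b; case: (@eqP nat a b) => ?; try (exfalso; lia)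
end.

Section ChangeOfBottoms.
Variables (R : comPzRingType) (n k : nat).
Hypotheses (hn : (1 < n)%N) (hk1 : (1 <= k)%N) (hkn : (k <= n)%N).

(* [b_1 = c_1 + ... + c_k], [b_j = - c_(j-1)] for [1 < j <= k], [b_j = c_j] for [j > k]. *)
Definition Tkmx : 'M[R]_n := \matrix_(j, c)
  (((j == 0%N :> nat) && (c < k)%N)%:R - ((j == c.+1 :> nat) && (c.+1 < k)%N)%:R
   + ((j == c :> nat) && (k <= c)%N)%:R).

(* [c_k = b_1 + ... + b_k], [c_j = - b_(j+1)] for [j < k], [c_j = b_j] for [j > k]. *)
Definition Tkinvmx : 'M[R]_n := \matrix_(i, j)
  (- ((i == j.-1 :> nat) && (0 < j < k)%N)%:R + ((i == k.-1 :> nat) && (j < k)%N)%:R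
   + ((i == j :> nat) && (k <= j)%N)%:R).

Lemma mulmx_Tkinv : Tkmx *m Tkinvmx = 1%:M.
Proof.
apply/matrixP => i j; rewrite !mxE.
under eq_bigr do rewrite [Tkinvmx _ _]mxE [Tkmx _ _]mxE mulrDr mulrDr mulrN.
rewrite !big_split /= sumrN !(sum_mul_indicator_ord i) ?val_insubd -[i == j]val_eqE /=.
have := ltn_ord i; have := ltn_ord j => *.
by case_nat_tests; rewrite /=; ring.
Qed.

Lemma Bsrc1 p : Bsrc n 1 p = p.
Proof. by rewrite /Bsrc; case_nat_tests; lia. Qed.

Variant Bsrc_spec (p : nat) : nat -> Prop :=
  | BsrcUhigh of (p < n - k)%N : Bsrc_spec p p
  | BsrcVk of p = (n - k)%N : Bsrc_spec p (n - 2 + k)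
  | BsrcUlow of (n - k < p < n - 1)%N : Bsrc_spec p p.-1
  | BsrcU1 of p = (n - 1)%N & (n - k < p)%N : Bsrc_spec p (n - 2)
  | BsrcVlow of (n - 1 < p <= n + k - 2)%N : Bsrc_spec p p.-1
  | BsrcVhigh of (n + k - 2 < p)%N : Bsrc_spec p p.

Lemma BsrcP p : Bsrc_spec p (Bsrc n k p).
Proof. by rewrite /Bsrc; case_nat_tests; constructor; lia. Qed.

Lemma Bsrc_lt p : (p < 2 * n - 1)%N -> (Bsrc n k p < 2 * n - 1)%N.
Proof. by move=> hp; case: BsrcP; lia. Qed.

(* Uniform in [k]: for [k = 1] the source map is the identity and no sign flips. *)
Lemma Bkmx_entry p q :
  Bkmx R n k p q = Bsgn R n k p * (q == Bsrc n k p :> nat)%:R.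
Proof.
rewrite /Bkmx; case: eqP => [->|_]; last by rewrite mxE; case: eqP; rewrite ?mulr1 ?mulr0.
rewrite mxE Bsrc1 /Bsgn eq_sym.
have -> : ((n <= p) && (p <= n + 1 - 2))%N = false by apply/negbTE/negP => /andP[]; lia.
by rewrite mul1r.
Qed.

Lemma Bkmx_mulmx_entry m (X : 'M[R]_(2 * n - 1, m)) p c :
  (Bkmx R n k *m X) p c =
  if (Bsrc n k p < 2 * n - 1)%N then Bsgn R n k p * X (insubd p (Bsrc n k p)) c else 0.
Proof.
rewrite mxE; under eq_bigr do rewrite Bkmx_entry mulrAC -(andbT (_ == _)).
by rewrite (sum_mul_indicator_ord p) andbT.
Qed.

Lemma Bk_Sk : Bkmx R n k *m Skmx R n k = Smx R n *m Tkmx.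
Proof.
apply/matrixP => p c; rewrite Bkmx_mulmx_entry !mxE.
under eq_bigr do rewrite [Tkmx _ _]mxE [Smx _ _ _ _]mxE mulrDr mulrBr.
rewrite big_split sumrB /= !(sum_mul_indicator_ord c) ?val_insubd -[\val c]/(c : nat).
rewrite Bsrc_lt // /Bsgn; have := ltn_ord p; have := ltn_ord c.
by case: BsrcP => *; case_nat_tests; rewrite /=; ring.
Qed.

End ChangeOfBottoms.

Lemma Tkmx_unit (R : comUnitRingType) n k :
  (1 < n)%N -> (1 <= k)%N -> (k <= n)%N -> Tkmx R n k \in unitmx.
Proof. by move=> hn hk1 hkn; case: (mulmx1_unit (mulmx_Tkinv R hn hk1 hkn)). Qed.

Theorem theorem1 (R : realFieldType) (n k : nat)
  (hn : (1 < n)%N) (hk1 : (1 <= k)%N) (hkn : (k <= n)%N)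
  (W Wk : 'M[R]_(2 * n - 1)) (yhat yhatk : 'cV[R]_(2 * n - 1)) :
  W \in unitmx ->
  ((Smx R n)^T *m invmx W *m Smx R n) \in unitmx ->
  Wk \in unitmx ->
  yhat = Bkmx R n k *m yhatk ->
  invmx Wk = (Bkmx R n k)^T *m invmx W *m Bkmx R n k ->
  ((Skmx R n k)^T *m invmx Wk *m Skmx R n k) \in unitmx /\
  recon (Smx R n) W yhat = Bkmx R n k *m recon (Skmx R n k) Wk yhatk.
Proof.
move=> _ uM _ -> hWk.
have uT := Tkmx_unit R hn hk1 hkn.
have BSk := Bk_Sk R hn hk1 hkn.
split.
  by rewrite hWk -quad_mulmx BSk quad_mulmx !unitmx_mul unitmx_tr uT uM.
by rewrite (mulmx_recon hWk) BSk recon_mulmxr.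
Qed.
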